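(* Let $\alpha=\exp\left(\frac{2\pi i}{5}\right)$, let $c,x\in\mathbb{C}$, and let $(a_1,A_1),\dots,(a_p,A_p)$ and $(b_1,B_1),\dots,(b_q,B_q)$ be parameter pairs ($a_j,b_j\in\mathbb{C}$, $A_j,B_j$ nonzero reals) such that all Pochhammer symbols involved are well defined and all series involved converge. Then $$\sum_{k=0}^{4}\alpha^{k}\,{}_p\Psi^{*}_q\left[\begin{array}{c}(a_1,A_1),\dots,(a_p,A_p);\\(b_1,B_1),\dots,(b_q,B_q);\end{array} c(x\alpha^k)^2\right] =\frac{(a_1)_{2A_1}\cdots(a_p)_{2A_p}}{(b_1)_{2B_1}\cdots(b_q)_{2B_q}}\,\frac{5c^2x^4}{2}\;{}_p\Psi^{*}_{q+4}\left[\begin{array}{c}(a_1+2A_1,5A_1),\dots,(a_p+2A_p,5A_p);\\ \left(\tfrac35,1\right),\left(\tfrac45,1\right),\left(\tfrac65,1\right),\left(\tfrac75,1\right),(b_1+2B_1,5B_1),\dots,(b_q+2B_q,5B_q);\end{array}\left(\frac{cx^2}{5}\right)^5\right].$$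
   Context: For $\lambda,\nu\in\mathbb{C}$ the Pochhammer symbol is $(\lambda)_\nu=\Gamma(\lambda+\nu)/\Gamma(\lambda)$ (with $(\lambda)_0=1$). The normalized Fox–Wright function is $${}_p\Psi^{*}_q\left[\begin{array}{c}(\alpha_1,A_1),\dots,(\alpha_p,A_p);\\(\beta_1,B_1),\dots,(\beta_q,B_q);\end{array}z\right]=\sum_{n=0}^{\infty}\frac{(\alpha_1)_{nA_1}\cdots(\alpha_p)_{nA_p}}{(\beta_1)_{nB_1}\cdots(\beta_q)_{nB_q}}\frac{z^n}{n!},$$ where $\alpha_i,\beta_j\in\mathbb{C}$ and $A_i,B_j$ are nonzero reals. Values of parameters and variables for which the expressions do not make sense are excluded. *)

From Stdlib Require Import Reals List Arith.
From Coquelicot Require Import Coquelicot.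
Open Scope C_scope.

Definition Cexp (z : C) : C :=
  (exp (Re z) * cos (Im z), exp (Re z) * sin (Im z))%R.

Definition natCpow (n : nat) (z : C) : C := Cexp (z * RtoC (ln (INR n))).

Definition euler_seq (z : C) (n : nat) : C :=
  RtoC (INR (fact n)) * natCpow n z /
  fold_right Cmult 1 (map (fun k => z + RtoC (INR k)) (seq 0 (S n))).

(* Complex Gamma function, defined by Euler's limit formula
   Gamma(z) = lim_{n -> oo} n! n^z / (z(z+1)...(z+n)),
   valid for z not in {0,-1,-2,...}. *)
Definition CGamma (z : C) : C :=
  @iota (CompleteNormedModule.CompleteSpace _ C_CompleteNormedModule) (fun l : C => filterlim (euler_seq z) eventually (locally l)).

Definition Gamma_pole (z : C) : Prop := exists k : nat, z = RtoC (- INR k).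

Definition Poch (lam : C) (nu : R) : C := CGamma (lam + RtoC nu) / CGamma lam.

Definition CSeries (a : nat -> C) : C := @iota (CompleteNormedModule.CompleteSpace _ C_CompleteNormedModule) (fun l : C => is_series a l).

Definition poch_prod (ps : list (C * R)) (n : nat) : C :=
  fold_right Cmult 1 (map (fun p => Poch (fst p) (INR n * snd p)) ps).

Definition FW_term (ps qs : list (C * R)) (z : C) (n : nat) : C :=
  poch_prod ps n / poch_prod qs n * (z ^ n) / RtoC (INR (fact n)).

Definition FoxWright (ps qs : list (C * R)) (z : C) : C :=
  CSeries (FW_term ps qs z).

(* Admissible parameter pair (a, A): A nonzero real and every Gamma argument
   a + m A (m = 0,1,2,...) occurring in the Pochhammer symbols is not a pole. *)
Definition admissible (p : C * R) : Prop :=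
  snd p <> 0%R /\ forall m : nat, ~ Gamma_pole (fst p + RtoC (INR m * snd p)).

Definition shift25 (p : C * R) : C * R :=
  (fst p + RtoC (2 * snd p), (5 * snd p)%R).

Definition alpha5 : C := Cexp (0%R, (2 * PI / 5)%R).

(* Since [alpha5^5 = 1], the order-[n] term of the left-hand side is the [n]-th Fox-Wright
   term at [c x^2] times [sum_(k<5) alpha5^(k (2n+1))], which is [5] when [n = 5m + 2] and [0]
   otherwise.  For [n = 5m + 2], the functional equation of Gamma splits
   [(a)_((5m+2)A) = (a)_(2A) (a+2A)_(5mA)], and Gauss's multiplication formula gives
   [(5m+2)! = 2 5^(5m) m! (3/5)_m (4/5)_m (6/5)_m (7/5)_m]; this turns the surviving terms into
   the series on the right.  Gamma is defined by Euler's limit, so its nonvanishing and its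
   functional equation off the poles come from the convergence of the product
   [n! n^z / (z (z+1) ... (z+n))], whose successive ratios differ from 1 by [O(1/n^2)]. *)

From Stdlib Require Import Reals List Arith Lia Lra ZifyNat.
From Coquelicot Require Import Coquelicot.
Open Scope C_scope.

Lemma RtoC_neq_0 (r : R) : r <> 0%R -> RtoC r <> 0.
Proof. intros Hr E. apply Hr, RtoC_inj, E. Qed.

Lemma Cinv_neq_0 (z : C) : z <> 0 -> / z <> 0.
Proof. intros Hz E. apply C1_nz. rewrite <- (Cinv_r z Hz), E. ring. Qed.

Lemma Cmod_le_Rabs_Re_Im (z : C) : (Cmod z <= Rabs (Re z) + Rabs (Im z))%R.
Proof.
  assert (Habs : (0 <= Rabs (Re z) + Rabs (Im z))%R)
    by (pose proof (Rabs_pos (Re z)); pose proof (Rabs_pos (Im z)); lra).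
  apply Rsqr_incr_0_var; [|exact Habs].
  rewrite !Rsqr_pow2, Cmod2_alt, <- (pow2_abs (Re z)), <- (pow2_abs (Im z)).
  pose proof (Rabs_pos (Re z)); pose proof (Rabs_pos (Im z)). nra.
Qed.

Lemma Cmod_add_RtoC_ge (z : C) (t : R) : (0 <= t)%R -> (t - Cmod z <= Cmod (z + RtoC t))%R.
Proof.
  intros Ht. pose proof (Cmod_triangle (z + RtoC t) (- z)) as T.
  replace (z + RtoC t + - z) with (RtoC t) in T by ring.
  rewrite Cmod_opp, Cmod_R, Rabs_pos_eq in T by exact Ht. lra.
Qed.

Lemma Cexp_add (z w : C) : Cexp (z + w) = Cexp z * Cexp w.
Proof.
  destruct z as [a b], w as [c d]; unfold Cexp, Re, Im; simpl.
  rewrite exp_plus, cos_plus, sin_plus.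
  apply injective_projections; simpl; ring.
Qed.

Lemma Cexp_RtoC (r : R) : Cexp (RtoC r) = RtoC (exp r).
Proof.
  unfold Cexp, Re, Im, RtoC; simpl. rewrite cos_0, sin_0.
  apply injective_projections; simpl; ring.
Qed.

Lemma Cmod_Cexp (z : C) : Cmod (Cexp z) = exp (Re z).
Proof.
  unfold Cexp, Cmod; cbn [fst snd].
  replace ((exp (Re z) * cos (Im z)) ^ 2 + (exp (Re z) * sin (Im z)) ^ 2)%R
    with (exp (Re z) ^ 2)%R
    by (pose proof (sin2_cos2 (Im z)) as H; unfold Rsqr in H; nra).
  apply sqrt_pow2, Rlt_le, exp_pos.
Qed.

Lemma Cexp_neq_0 (z : C) : Cexp z <> 0.
Proof.
  intro E. pose proof (Cmod_Cexp z) as H. rewrite E, Cmod_0 in H.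
  pose proof (exp_pos (Re z)). lra.
Qed.

Lemma exp_sub_1_sub_bound (u : R) :
  (Rabs u <= 1/2 -> 0 <= exp u - 1 - u <= 2 * u ^ 2)%R.
Proof.
  intros Hu. apply Rabs_le_between in Hu.
  pose proof (exp_ineq1_le u). pose proof (exp_ineq1_le (- u)).
  assert (exp u * exp (- u) = 1)%R by (rewrite <- exp_plus, Rplus_opp_r; apply exp_0).
  pose proof (exp_pos u).
  (* [exp u <= 1 / (1 - u) <= 1 + u + 2 u^2] on [|u| <= 1/2] *)
  assert ((1 + u + 2 * u ^ 2) * (1 - u) >= 1)%R by nra.
  nra.
Qed.

Lemma cos_sub_1_bound (v : R) : (Rabs v <= 1 -> 0 <= 1 - cos v <= v ^ 2 / 2)%R.
Proof.
  intros Hv. apply Rabs_le_between in Hv.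
  destruct (pre_cos_bound v 0) as [H _]; try lra.
  unfold cos_approx, cos_term in H; simpl in H.
  pose proof (COS_bound v). lra.
Qed.

Lemma sin_sub_bound (v : R) : (Rabs v <= 1 -> Rabs (sin v - v) <= v ^ 2)%R.
Proof.
  assert (Hpos : forall a, (0 <= a <= 1 -> Rabs (sin a - a) <= a ^ 2)%R).
  { intros a Ha. destruct (pre_sin_bound a 0) as [H1 H2]; try lra.
    replace (sin_approx a (2 * 0 + 1)) with (a - a ^ 3 / 6)%R in H1
      by (unfold sin_approx, sin_term; simpl; field).
    replace (sin_approx a (2 * (0 + 1))) with (a - a ^ 3 / 6 + a ^ 5 / 120)%R in H2
      by (unfold sin_approx, sin_term; simpl; field).
    assert (0 <= a ^ 3 <= a ^ 2)%R
      by (split; [apply pow_le; lra | replace (a ^ 3)%R with (a ^ 2 * a)%R by ring; nra]).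
    assert (a ^ 5 <= a ^ 3)%R by (replace (a ^ 5)%R with (a ^ 3 * a ^ 2)%R by ring; nra).
    apply Rabs_le. split; nra. }
  intros Hv. apply Rabs_le_between in Hv. destruct (Rle_dec 0 v).
  - apply Hpos. lra.
  - replace (sin v - v)%R with (- (sin (- v) - (- v)))%R by (rewrite sin_neg; ring).
    rewrite Rabs_Ropp. replace (v ^ 2)%R with ((- v) ^ 2)%R by ring. apply Hpos. lra.
Qed.

Lemma Cexp_sub_1_sub_bound (w : C) :
  (Cmod w <= 1/2 -> Cmod (Cexp w - 1 - w) <= 4 * Cmod w ^ 2)%R.
Proof.
  destruct w as [u v]; intros Hw.
  pose proof (Rmax_Cmod (u, v)) as HM; cbn [fst snd] in HM.
  assert (Hu : (Rabs u <= 1/2)%R) by (pose proof (Rmax_l (Rabs u) (Rabs v)); lra).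
  assert (Hv : (Rabs v <= 1/2)%R) by (pose proof (Rmax_r (Rabs u) (Rabs v)); lra).
  destruct (exp_sub_1_sub_bound u Hu) as [E1 E2].
  destruct (cos_sub_1_bound v) as [C1 C2]; [lra|].
  pose proof (sin_sub_bound v ltac:(lra)) as S.
  rewrite Cmod2_alt. eapply Rle_trans; [apply Cmod_le_Rabs_Re_Im|].
  unfold Cexp, Re, Im; cbn [fst snd Cminus Cplus Copp RtoC].
  set (E := exp u) in *.
  assert (HE : (0 < E <= 2)%R) by (split; [apply exp_pos|]; apply Rabs_le_between in Hu; nra).
  (* real part [(e^u - 1 - u) + e^u (cos v - 1)], imaginary part [(e^u - 1) v + e^u (sin v - v)] *)
  assert (Hre : (Rabs (E * cos v + - (1) + - u) <= 2 * u ^ 2 + v ^ 2)%R)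
    by (assert (0 <= E * (1 - cos v) <= v ^ 2)%R by (split; nra); apply Rabs_le; nra).
  assert (Him : (Rabs (E * sin v + - 0 + - v) <= 2 * Rabs u * Rabs v + 2 * v ^ 2)%R).
  { replace (E * sin v + - 0 + - v)%R with ((E - 1) * v + E * (sin v - v))%R by ring.
    eapply Rle_trans; [apply Rabs_triang|]. rewrite !Rabs_mult, (Rabs_pos_eq E) by lra.
    assert (Rabs (E - 1) <= 2 * Rabs u)%R
      by (apply Rabs_le; apply Rabs_le_between in Hu; unfold Rabs; destruct Rcase_abs; nra).
    pose proof (Rabs_pos v). pose proof (Rabs_pos (sin v - v)). nra. }
  assert (2 * Rabs u * Rabs v <= u ^ 2 + v ^ 2)%R
    by (rewrite <- (pow2_abs u), <- (pow2_abs v); pose proof (pow2_ge_0 (Rabs u - Rabs v)); nra).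
  lra.
Qed.

(** * Convergent infinite products *)

Lemma filterlim_locally_C_AbsRing {T : Type} {F : (T -> Prop) -> Prop} (f : T -> C) (l : C) :
  filterlim f F (locally l) ->
  filterlim f F (@locally (AbsRing_UniformSpace C_AbsRing) l).
Proof.
  intros Hf P [eps HP]. apply Hf, (locally_le_locally_norm (V := C_NormedModule)).
  exists eps. exact HP.
Qed.

Lemma filterlim_Cmult {T : Type} {F : (T -> Prop) -> Prop} {FF : Filter F}
  (f g : T -> C) (l1 l2 : C) :
  filterlim f F (locally l1) -> filterlim g F (locally l2) ->
  filterlim (fun t => f t * g t) F (locally (l1 * l2)).
Proof.
  intros Hf Hg. apply filterlim_locally_C_AbsRing in Hf.
  exact (filterlim_comp_2 f g (@scal C_AbsRing C_NormedModule) Hf Hg (filterlim_scal l1 l2)).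
Qed.

Lemma filterlim_C_Cmod (f : nat -> C) (l : C) :
  (forall eps : R, (0 < eps)%R ->
     exists N, forall n, (N <= n)%nat -> (Cmod (f n - l) < eps)%R) ->
  filterlim f eventually (locally l).
Proof.
  intros H. apply filterlim_locally. intros [eps Heps].
  destruct (H eps Heps) as [N HN]. exists N. intros n Hn.
  apply C_NormedModule_mixin_compat1, HN, Hn.
Qed.

Lemma CSeries_correct (a : nat -> C) (l : C) : is_series a l -> CSeries a = l.
Proof.
  intros H. apply (@iota_filterlim_locally C_AbsRing C_CompleteNormedModule).
  - apply Proper_StrongProper, eventually_filter.
  - exact H.
Qed.

Lemma sum_n_le_series (t : nat -> R) (T : R) :
  (forall n, 0 <= t n)%R -> is_series t T -> forall n, (sum_n t n <= T)%R.
Proof.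
  intros Ht HT n. rewrite sum_n_Reals. apply sum_incr; [|exact Ht].
  apply is_series_Reals, HT.
Qed.

Lemma ex_series_le_eventually (s b : nat -> R) (N : nat) :
  (forall n, (N <= n)%nat -> 0 <= s n <= b n)%R -> ex_series b -> ex_series s.
Proof.
  intros H Hb. apply (ex_series_incr_n s N).
  apply (@ex_series_le R_AbsRing R_CompleteNormedModule) with (b := fun k => b (N + k)%nat).
  - intros k. destruct (H (N + k)%nat ltac:(lia)) as [H0 H1].
    change (Rabs (s (N + k)%nat) <= b (N + k)%nat)%R. rewrite Rabs_pos_eq; lra.
  - apply (ex_series_incr_n b N), Hb.
Qed.

Lemma sum_n_telescope {G : AbelianGroup} (a : nat -> G) (n : nat) :
  sum_n (fun k => minus (a (S k)) (a k)) n = minus (a (S n)) (a O).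
Proof.
  induction n as [|n IH].
  - now rewrite sum_O.
  - rewrite sum_Sn, IH, plus_comm. unfold minus.
    rewrite <- plus_assoc, (plus_assoc (opp (a (S n)))), plus_opp_l, plus_zero_l. reflexivity.
Qed.

Lemma is_series_sum_n {K : AbsRing} {V : NormedModule K}
  (f : nat -> nat -> V) (l : nat -> V) (m : nat) :
  (forall k, (k <= m)%nat -> is_series (f k) (l k)) ->
  is_series (fun n => sum_n (fun k => f k n) m) (sum_n l m).
Proof.
  induction m as [|m IH]; intros Hf.
  - rewrite sum_O. apply (is_series_ext (f O)); [intros n; now rewrite sum_O|]. apply Hf; lia.
  - rewrite sum_Sn.
    apply (is_series_ext (fun n => plus (sum_n (fun k => f k n) m) (f (S m) n))).
    { intros n. now rewrite sum_Sn. }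
    apply is_series_plus; [apply IH; intros; apply Hf; lia | apply Hf; lia].
Qed.

Lemma filterlim_S_eventually (a : nat -> C) (l : C) :
  filterlim (fun n => a (S n)) eventually (locally l) -> filterlim a eventually (locally l).
Proof.
  intros H P HP. destruct (H P HP) as [N HN]. exists (S N).
  intros [|n] Hn; [lia|]. apply HN. lia.
Qed.

Lemma Cmod_inv_sub_1 (r : C) :
  (Cmod (r - 1) <= 1/2)%R -> (Cmod (/ r - 1) <= 2 * Cmod (r - 1))%R.
Proof.
  intros H.
  assert (Hr : (1/2 <= Cmod r)%R).
  { pose proof (Cmod_triangle r (1 - r)) as T.
    replace (r + (1 - r)) with (RtoC 1) in T by ring.
    replace (1 - r) with (- (r - 1)) in T by ring. rewrite Cmod_1, Cmod_opp in T. lra. }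
  assert (Hr0 : r <> 0) by (intro E; rewrite E, Cmod_0 in Hr; lra).
  replace (/ r - 1) with (- (r - 1) / r) by (field; exact Hr0).
  rewrite Cmod_div, Cmod_opp by exact Hr0.
  assert (/ Cmod r <= 2)%R by (replace 2%R with (/ (1/2))%R by field; apply Rinv_le_contravar; lra).
  pose proof (Cmod_ge_0 (r - 1)). unfold Rdiv. nra.
Qed.

Lemma ex_series_Cmod_inv_sub_1 (r : nat -> C) :
  ex_series (fun n => Cmod (r n - 1)) -> ex_series (fun n => Cmod (/ r n - 1)).
Proof.
  intros Hsum. pose proof (ex_series_lim_0 _ Hsum) as H0. apply is_lim_seq_spec in H0.
  destruct (H0 (mkposreal (1/2) ltac:(lra))) as [N HN]; simpl in HN.
  apply (ex_series_le_eventually _ (fun n => 2 * Cmod (r n - 1))%R N).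
  - intros n Hn. split; [apply Cmod_ge_0|]. apply Cmod_inv_sub_1.
    specialize (HN n Hn). rewrite Rminus_0_r, Rabs_pos_eq in HN by apply Cmod_ge_0. lra.
  - apply (@ex_series_scal R_AbsRing R_NormedModule), Hsum.
Qed.

Section InfiniteProduct.

Variables (a r : nat -> C).
Hypothesis a_S : forall n, a (S n) = a n * r n.
Hypothesis r_summable : ex_series (fun n => Cmod (r n - 1)).

Lemma prod_bounded : exists M, forall n, (Cmod (a n) <= M)%R.
Proof.
  destruct r_summable as [T HT]. set (t := fun n => Cmod (r n - 1)) in HT.
  assert (Ht : forall n, (0 <= t n)%R) by (intros; apply Cmod_ge_0).
  pose proof (sum_n_le_series t T Ht HT) as HtT.
  assert (Hr : forall n, (Cmod (r n) <= exp (t n))%R).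
  { intros n. eapply Rle_trans; [|apply exp_ineq1_le].
    replace (r n) with (1 + (r n - 1)) at 1 by ring.
    eapply Rle_trans; [apply Cmod_triangle|]. rewrite Cmod_1. unfold t; lra. }
  assert (HaS : forall n, (Cmod (a (S n)) <= Cmod (a O) * exp (sum_n t n))%R).
  { induction n as [|n IH].
    - rewrite sum_O, a_S, Cmod_mult. apply Rmult_le_compat_l; [apply Cmod_ge_0|apply Hr].
    - rewrite sum_Sn, a_S, Cmod_mult. change (plus _ _) with (sum_n t n + t (S n))%R.
      rewrite exp_plus, <- Rmult_assoc.
      apply Rmult_le_compat; auto using Cmod_ge_0. }
  assert (Hexp : forall n, (exp (sum_n t n) <= exp T)%R).
  { intros n. destruct (Rle_lt_or_eq_dec _ _ (HtT n)) as [Hlt | ->];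
      [left; apply exp_increasing, Hlt | right; reflexivity]. }
  exists (Cmod (a O) * exp T)%R. intros [|n].
  - pose proof (HtT O) as H0. rewrite sum_O in H0. pose proof (Ht O).
    pose proof (Cmod_ge_0 (a O)). pose proof (exp_ineq1_le T). nra.
  - eapply Rle_trans; [apply HaS|]. apply Rmult_le_compat_l; [apply Cmod_ge_0|apply Hexp].
Qed.

Lemma prod_cvg : exists l, filterlim a eventually (locally l).
Proof.
  destruct prod_bounded as [M HM]. destruct r_summable as [T HT].
  assert (Hd : ex_series (fun n => a (S n) - a n)).
  { apply (@ex_series_le C_AbsRing C_CompleteNormedModule)
      with (b := fun n => (M * Cmod (r n - 1))%R).
    - intros n. change (Cmod (a (S n) - a n) <= M * Cmod (r n - 1))%R.
      rewrite a_S. replace (a n * r n - a n) with (a n * (r n - 1)) by ring.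
      rewrite Cmod_mult. apply Rmult_le_compat_r; [apply Cmod_ge_0|apply HM].
    - exists (M * T)%R. exact (is_series_scal M _ T HT). }
  destruct Hd as [D HD]. exists (D + a O). apply filterlim_S_eventually.
  apply (filterlim_ext (fun n => sum_n (fun k => a (S k) - a k) n + a O)).
  { intros n. change (plus (sum_n (fun k => minus (a (S k)) (a k)) n) (a O) = a (S n)).
    rewrite sum_n_telescope. unfold minus. rewrite <- plus_assoc, plus_opp_l. apply plus_zero_r. }
  exact (filterlim_comp_2 _ _ _ HD (filterlim_const (a O)) (filterlim_plus D (a O))).
Qed.

End InfiniteProduct.

(* The reciprocal product has summable ratios too, so a zero limit is impossible. *)
Lemma prod_cvg_neq_0 (a r : nat -> C) :
  (forall n, a (S n) = a n * r n) -> ex_series (fun n => Cmod (r n - 1)) ->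
  a O <> 0 -> (forall n, r n <> 0) ->
  exists l : C, l <> 0 /\ filterlim a eventually (locally l).
Proof.
  intros a_S Hsum Ha0 Hr.
  destruct (prod_cvg a r a_S Hsum) as [l Hl]. exists l. split; [|exact Hl].
  assert (Ha : forall n, a n <> 0).
  { induction n as [|n IH]; [exact Ha0|]. rewrite a_S. apply Cmult_neq_0; auto. }
  destruct (prod_cvg (fun n => / a n) (fun n => / r n)) as [l' Hl'];
    [intros n; rewrite a_S; field; auto | apply ex_series_Cmod_inv_sub_1, Hsum |].
  intros ->.
  assert (H0 : filterlim (fun n => a n * / a n) eventually (locally (0 * l')))
    by exact (filterlim_Cmult _ _ _ _ Hl Hl').
  assert (H1 : filterlim (fun n => a n * / a n) eventually (locally (RtoC 1))).
  { apply (filterlim_ext (fun _ => RtoC 1)); [intros n; field; auto | apply filterlim_const]. }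
  apply C1_nz. rewrite <- (filterlim_locally_unique _ _ _ H0 H1). ring.
Qed.

(** * Euler's limit formula for Gamma *)

Fixpoint rising (z : C) (m : nat) : C :=
  match m with
  | O => 1
  | S m => rising z m * (z + RtoC (INR m))
  end.

Lemma RtoC_INR_S (n : nat) : RtoC (INR (S n)) = RtoC (INR n) + 1.
Proof. now rewrite S_INR, RtoC_plus. Qed.

Lemma fold_right_Cmult_map_seq (z : C) (m : nat) :
  fold_right Cmult 1 (map (fun k => z + RtoC (INR k)) (seq 0 m)) = rising z m.
Proof.
  assert (Hc : forall l c, fold_right Cmult c l = fold_right Cmult 1 l * c).
  { induction l as [|x l IH]; intros c; simpl; [ring | rewrite IH; ring]. }
  induction m as [|m IH]; [reflexivity|].
  rewrite seq_S, map_app, fold_right_app, Hc, IH. simpl. ring.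
Qed.

Lemma rising_add (z : C) (m n : nat) :
  rising z (m + n) = rising z m * rising (z + RtoC (INR m)) n.
Proof.
  induction n as [|n IH]; [simpl; rewrite Nat.add_0_r; ring|].
  rewrite Nat.add_succ_r. simpl. rewrite IH, plus_INR, RtoC_plus. ring.
Qed.

Lemma rising_S_shift (z : C) (m : nat) : rising z (S m) = z * rising (z + 1) m.
Proof. change (S m) with (1 + m)%nat. rewrite rising_add. simpl. ring. Qed.

Lemma rising_1 (n : nat) : rising 1 n = RtoC (INR (fact n)).
Proof.
  induction n as [|n IH]; [reflexivity|].
  simpl rising. rewrite IH, fact_simpl, mult_INR, RtoC_mult, RtoC_INR_S. ring.
Qed.

Lemma not_Gamma_pole_add_INR (z : C) (k : nat) :
  ~ Gamma_pole z -> ~ Gamma_pole (z + RtoC (INR k)).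
Proof.
  intros Hz [j Hj]. apply Hz. exists (j + k)%nat.
  rewrite plus_INR, Ropp_plus_distr, RtoC_plus, <- Hj, RtoC_opp. ring.
Qed.

Lemma not_Gamma_pole_succ (z : C) : ~ Gamma_pole z -> ~ Gamma_pole (z + 1).
Proof. apply (not_Gamma_pole_add_INR z 1). Qed.

Lemma not_Gamma_pole_neq_0 (z : C) : ~ Gamma_pole z -> z <> 0.
Proof. intros Hz E. apply Hz. exists O. rewrite E. simpl. now rewrite Ropp_0. Qed.

Lemma not_Gamma_pole_pos (r : R) : (0 < r)%R -> ~ Gamma_pole (RtoC r).
Proof.
  intros Hr [k Hk]. apply RtoC_inj in Hk. pose proof (pos_INR k). lra.
Qed.

Lemma rising_neq_0 (z : C) (m : nat) : ~ Gamma_pole z -> rising z m <> 0.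
Proof.
  intros Hz. induction m as [|m IH]; simpl; [exact C1_nz|].
  apply Cmult_neq_0; [exact IH|]. apply not_Gamma_pole_neq_0, not_Gamma_pole_add_INR, Hz.
Qed.

Lemma rising_mul_5 (z : C) (m : nat) :
  rising z (5 * m) =
  RtoC 5 ^ (5 * m) * rising (z / 5) m * rising ((z + 1) / 5) m *
  rising ((z + 2) / 5) m * rising ((z + 3) / 5) m * rising ((z + 4) / 5) m.
Proof.
  induction m as [|m IH]; [simpl; ring|].
  replace (5 * S m)%nat with (5 * m + 5)%nat by lia.
  rewrite rising_add, IH, Cpow_add_r, mult_INR, RtoC_mult. cbn [rising INR].
  rewrite !RtoC_plus. field.
Qed.

Lemma euler_seq_rising (z : C) (n : nat) :
  euler_seq z n = RtoC (INR (fact n)) * natCpow n z / rising z (S n).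
Proof. unfold euler_seq. now rewrite fold_right_Cmult_map_seq. Qed.

Definition euler_ratio (z : C) (n : nat) : C :=
  RtoC (INR (S n)) / (z + RtoC (INR (S n))) *
  Cexp (z * RtoC (ln (INR (S n)) - ln (INR n))).

(* Also at [n = 0]: [natCpow 0 z] and [euler_ratio z 0] use the same junk value [ln 0]. *)
Lemma euler_seq_S (z : C) (n : nat) :
  ~ Gamma_pole z -> euler_seq z (S n) = euler_seq z n * euler_ratio z n.
Proof.
  intros Hz. rewrite !euler_seq_rising. unfold euler_ratio, natCpow.
  replace (z * RtoC (ln (INR (S n))))
    with (z * RtoC (ln (INR n)) + z * RtoC (ln (INR (S n)) - ln (INR n)))
    by (rewrite RtoC_minus; ring).
  rewrite Cexp_add, fact_simpl, mult_INR, RtoC_mult.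
  change (rising z (S (S n))) with (rising z (S n) * (z + RtoC (INR (S n)))).
  field. split.
  - apply not_Gamma_pole_neq_0, not_Gamma_pole_add_INR, Hz.
  - apply rising_neq_0, Hz.
Qed.

Lemma ln_le_sub_1 (y : R) : (0 < y -> ln y <= y - 1)%R.
Proof.
  intros Hy. rewrite <- (ln_exp (y - 1)). apply ln_le; [exact Hy|].
  pose proof (exp_ineq1_le (y - 1)). lra.
Qed.

Lemma ln_succ_sub_bounds (M : R) : (0 < M -> 1 / (M + 1) <= ln (M + 1) - ln M <= 1 / M)%R.
Proof.
  intros HM. split.
  - pose proof (ln_le_sub_1 (M / (M + 1)) ltac:(apply Rdiv_lt_0_compat; lra)) as H.
    rewrite ln_div in H by lra.
    replace (M / (M + 1) - 1)%R with (- (1 / (M + 1)))%R in H by (field; lra). lra.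
  - pose proof (ln_le_sub_1 ((M + 1) / M) ltac:(apply Rdiv_lt_0_compat; lra)) as H.
    rewrite ln_div in H by lra.
    replace ((M + 1) / M - 1)%R with (1 / M)%R in H by (field; lra). lra.
Qed.

Lemma euler_ratio_sub_1_eq (z : C) (n : nat) : z + RtoC (INR (S n)) <> 0 ->
  euler_ratio z n - 1 =
  (RtoC (INR (S n)) * (Cexp (z * RtoC (ln (INR (S n)) - ln (INR n))) - 1
                       - z * RtoC (ln (INR (S n)) - ln (INR n)))
   + z * RtoC (INR (S n) * (ln (INR (S n)) - ln (INR n)) - 1)) / (z + RtoC (INR (S n))).
Proof.
  intros HD. unfold euler_ratio. set (L := (ln (INR (S n)) - ln (INR n))%R).
  rewrite RtoC_minus, RtoC_mult. field. exact HD.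
Qed.

(* Both terms of [euler_ratio_sub_1_eq] are [O(1/n)], the denominator is of order [n]. *)
Lemma euler_ratio_sub_1_bound (z : C) (n : nat) :
  (2 * Cmod z + 2 <= INR n)%R ->
  (Cmod (euler_ratio z n - 1) <= (16 * Cmod z ^ 2 + 2 * Cmod z) / (INR n * (INR n + 1)))%R.
Proof.
  intros Hn.
  assert (HD : (INR (S n) - Cmod z <= Cmod (z + RtoC (INR (S n))))%R)
    by (apply Cmod_add_RtoC_ge, pos_INR).
  assert (HD0 : z + RtoC (INR (S n)) <> 0)
    by (intro E; rewrite E, Cmod_0, S_INR in HD; pose proof (Cmod_ge_0 z); lra).
  rewrite euler_ratio_sub_1_eq, Cmod_div by exact HD0.
  rewrite S_INR in *. set (M := INR n) in *. set (Z := Cmod z) in *.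
  set (L := (ln (M + 1) - ln M)%R). set (w := z * RtoC L).
  assert (HZ : (0 <= Z)%R) by apply Cmod_ge_0.
  destruct (ln_succ_sub_bounds M ltac:(lra)) as [L1 L2]; fold L in L1, L2.
  assert (HL : (0 < L)%R) by (eapply Rlt_le_trans; [|exact L1]; apply Rdiv_lt_0_compat; lra).
  assert (Hw : (Cmod w <= Z / M)%R).
  { unfold w. rewrite Cmod_mult, Cmod_R, Rabs_pos_eq by lra.
    replace (Z / M)%R with (Z * (1 / M))%R by (field; lra). apply Rmult_le_compat_l; lra. }
  assert (HA : (Cmod (Cexp w - 1 - w) <= 4 * (Z / M) ^ 2)%R).
  { eapply Rle_trans; [apply Cexp_sub_1_sub_bound|].
    - eapply Rle_trans; [exact Hw|]. apply Rle_div_l; lra.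
    - apply Rmult_le_compat_l; [lra|]. apply pow_incr. split; [apply Cmod_ge_0|exact Hw]. }
  assert (HB : (Rabs ((M + 1) * L - 1) <= 1 / M)%R).
  { apply Rabs_le. split.
    - assert ((M + 1) * (1 / (M + 1)) = 1)%R by (field; lra). nra.
    - assert ((M + 1) * (1 / M) = 1 + 1 / M)%R by (field; lra). nra. }
  apply Rle_div_l; [lra|].
  apply Rle_trans with ((8 * Z ^ 2 + Z) / M)%R.
  - eapply Rle_trans; [apply Cmod_triangle|].
    rewrite !Cmod_mult, !Cmod_R, (Rabs_pos_eq (M + 1)) by lra. fold Z w.
    apply Rle_trans with ((M + 1) * (4 * (Z / M) ^ 2) + Z * (1 / M))%R.
    + apply Rplus_le_compat; apply Rmult_le_compat_l; lra.
    + replace ((8 * Z ^ 2 + Z) / M)%R with (2 * M * (4 * (Z / M) ^ 2) + Z * (1 / M))%R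
        by (field; lra).
      pose proof (pow2_ge_0 (Z / M)). nra.
  - replace ((8 * Z ^ 2 + Z) / M)%R
      with ((16 * Z ^ 2 + 2 * Z) / (M * (M + 1)) * ((M + 1) / 2))%R by (field; lra).
    apply Rmult_le_compat_l; [|lra].
    apply Rdiv_le_0_compat; [pose proof (pow2_ge_0 Z); lra | nra].
Qed.

Lemma is_series_inv_succ_mul : is_series (fun n => / ((INR n + 1) * (INR n + 2)))%R 1%R.
Proof.
  change (is_lim_seq (sum_n (fun n => / ((INR n + 1) * (INR n + 2)))%R) 1%R).
  apply (is_lim_seq_ext (fun n => 1 - / (INR n + 2))%R).
  { intros n. induction n as [|n IH].
    - rewrite sum_O. simpl. field.
    - rewrite sum_Sn, <- IH, S_INR. change (plus ?u ?v) with (u + v)%R.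
      pose proof (pos_INR n). field. lra. }
  replace (Finite 1) with (Finite (1 - 0)) by (f_equal; ring).
  apply is_lim_seq_minus'; [apply is_lim_seq_const|].
  replace (Finite 0) with (Rbar_inv p_infty) by reflexivity.
  apply is_lim_seq_inv; [|discriminate].
  apply (is_lim_seq_ext (fun n => INR (n + 2))); [intros n; now rewrite plus_INR|].
  apply (is_lim_seq_incr_n INR 2), is_lim_seq_INR.
Qed.

Lemma euler_seq_cvg (z : C) :
  ~ Gamma_pole z -> exists l : C, l <> 0 /\ filterlim (euler_seq z) eventually (locally l).
Proof.
  intros Hz. apply (prod_cvg_neq_0 (euler_seq z) (euler_ratio z)).
  - intros n. apply euler_seq_S, Hz.
  - apply ex_series_incr_1.
    destruct (INR_unbounded (2 * Cmod z + 2)) as [N HN].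
    set (K := (16 * Cmod z ^ 2 + 2 * Cmod z)%R).
    apply (ex_series_le_eventually _ (fun n => K * / ((INR n + 1) * (INR n + 2)))%R N).
    + intros n Hn. split; [apply Cmod_ge_0|].
      replace (INR n + 2)%R with (INR (S n) + 1)%R by (rewrite S_INR; ring).
      rewrite <- S_INR. apply euler_ratio_sub_1_bound.
      apply le_INR in Hn. rewrite S_INR. lra.
    + eexists. exact (@is_series_scal R_AbsRing R_NormedModule K _ _ is_series_inv_succ_mul).
  - rewrite euler_seq_rising. unfold natCpow.
    apply Cmult_neq_0; [apply Cmult_neq_0 | apply Cinv_neq_0, rising_neq_0, Hz].
    + apply RtoC_neq_0, INR_fact_neq_0.
    + apply Cexp_neq_0.
  - intros n. unfold euler_ratio. apply Cmult_neq_0; [|apply Cexp_neq_0].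
    apply Cmult_neq_0; [apply RtoC_neq_0, not_0_INR; lia|].
    apply Cinv_neq_0, not_Gamma_pole_neq_0, not_Gamma_pole_add_INR, Hz.
Qed.

Lemma CGamma_spec (z : C) :
  ~ Gamma_pole z -> CGamma z <> 0 /\ filterlim (euler_seq z) eventually (locally (CGamma z)).
Proof.
  intros Hz. destruct (euler_seq_cvg z Hz) as [l [Hl0 Hl]].
  replace (CGamma z) with l; [split; assumption|].
  symmetry. apply (@iota_filterlim_locally C_AbsRing C_CompleteNormedModule); [|exact Hl].
  apply Proper_StrongProper, eventually_filter.
Qed.

Lemma CGamma_neq_0 (z : C) : ~ Gamma_pole z -> CGamma z <> 0.
Proof. intros Hz. apply CGamma_spec, Hz. Qed.

(** * The functional equation of Gamma *)

Lemma euler_seq_succ_arg (z : C) (n : nat) : (0 < n)%nat -> ~ Gamma_pole z ->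
  euler_seq (z + 1) n = z * euler_seq z n * (RtoC (INR n) / (z + RtoC (INR (S n)))).
Proof.
  intros Hn Hz. rewrite !euler_seq_rising.
  assert (Hpow : natCpow n (z + 1) = natCpow n z * RtoC (INR n)).
  { unfold natCpow. rewrite Cmult_plus_distr_r, Cmult_1_l, Cexp_add, Cexp_RtoC, exp_ln;
      [reflexivity | apply lt_0_INR, Hn]. }
  assert (Hrise : rising z (S (S n)) = z * rising (z + 1) (S n)) by apply rising_S_shift.
  change (rising z (S (S n))) with (rising z (S n) * (z + RtoC (INR (S n)))) in Hrise.
  rewrite Hpow.
  replace (rising (z + 1) (S n)) with (rising z (S n) * (z + RtoC (INR (S n))) / z)
    by (rewrite Hrise; field; apply not_Gamma_pole_neq_0, Hz).
  field. repeat split.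
  - apply not_Gamma_pole_neq_0, not_Gamma_pole_add_INR, Hz.
  - apply rising_neq_0, Hz.
  - apply not_Gamma_pole_neq_0, Hz.
Qed.

Lemma is_lim_INR_div_shift (z : C) :
  filterlim (fun n => RtoC (INR n) / (z + RtoC (INR (S n)))) eventually (locally (RtoC 1)).
Proof.
  apply filterlim_C_Cmod. intros eps Heps.
  destruct (INR_unbounded (Cmod z + Cmod (z + 1) / eps)) as [N HN].
  exists N. intros n Hn. apply le_INR in Hn.
  set (D := z + RtoC (INR (S n))).
  assert (HD : (INR (S n) - Cmod z <= Cmod D)%R) by (apply Cmod_add_RtoC_ge, pos_INR).
  rewrite S_INR in HD.
  assert (Hq : (0 <= Cmod (z + 1) / eps)%R) by (apply Rdiv_le_0_compat; [apply Cmod_ge_0|lra]).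
  assert (HD0 : D <> 0) by (intro E; rewrite E, Cmod_0 in HD; lra).
  replace (RtoC (INR n) / D - 1) with (- (z + 1) / D)
    by (revert HD0; unfold D; rewrite RtoC_INR_S; intros; field; exact HD0).
  rewrite Cmod_div, Cmod_opp by exact HD0.
  apply Rlt_div_l; [lra|].
  rewrite Rmult_comm. apply Rlt_div_l; [exact Heps|]. lra.
Qed.

Lemma CGamma_succ (z : C) : ~ Gamma_pole z -> CGamma (z + 1) = z * CGamma z.
Proof.
  intros Hz.
  destruct (CGamma_spec z Hz) as [_ Hlim].
  destruct (CGamma_spec (z + 1) (not_Gamma_pole_succ z Hz)) as [_ Hlim1].
  apply (filterlim_locally_unique _ _ _ Hlim1).
  rewrite <- (Cmult_1_r (z * CGamma z)).
  apply (filterlim_ext_loc (fun n => z * euler_seq z n * (RtoC (INR n) / (z + RtoC (INR (S n)))))).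
  - exists 1%nat. intros n Hn. symmetry. apply euler_seq_succ_arg; [lia | exact Hz].
  - apply filterlim_Cmult; [|apply is_lim_INR_div_shift].
    apply filterlim_Cmult; [apply filterlim_const | exact Hlim].
Qed.

Lemma CGamma_add_INR (z : C) (m : nat) :
  ~ Gamma_pole z -> CGamma (z + RtoC (INR m)) = CGamma z * rising z m.
Proof.
  intros Hz. induction m as [|m IH].
  - simpl. rewrite Cplus_0_r. ring.
  - simpl rising. rewrite RtoC_INR_S, Cplus_assoc, CGamma_succ, IH
      by apply not_Gamma_pole_add_INR, Hz.
    ring.
Qed.

Lemma Poch_add (a : C) (s t : R) :
  ~ Gamma_pole (a + RtoC s) -> Poch a (s + t) = Poch a s * Poch (a + RtoC s) t.
Proof.
  intros Has. unfold Poch. rewrite RtoC_plus, Cplus_assoc.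
  unfold Cdiv. rewrite <- (Cmult_1_r (CGamma (a + RtoC s + RtoC t) * / CGamma a)) at 1.
  rewrite <- (Cinv_r (CGamma (a + RtoC s))) by (apply CGamma_neq_0, Has). ring.
Qed.

Lemma Poch_INR (z : C) (m : nat) : ~ Gamma_pole z -> Poch z (INR m) = rising z m.
Proof.
  intros Hz. unfold Poch. rewrite CGamma_add_INR by exact Hz.
  field. apply CGamma_neq_0, Hz.
Qed.

Lemma Poch_neq_0 (a : C) (nu : R) :
  ~ Gamma_pole a -> ~ Gamma_pole (a + RtoC nu) -> Poch a nu <> 0.
Proof.
  intros Ha Hanu. unfold Poch, Cdiv.
  apply Cmult_neq_0; [|apply Cinv_neq_0]; apply CGamma_neq_0; assumption.
Qed.

Lemma admissible_not_Gamma_pole (p : C * R) : admissible p -> ~ Gamma_pole (fst p).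
Proof.
  intros [_ Hp]. specialize (Hp O). simpl in Hp. now rewrite Rmult_0_l, Cplus_0_r in Hp.
Qed.

Lemma admissible_shift25 (p : C * R) : admissible p -> admissible (shift25 p).
Proof.
  destruct p as [a A]. intros [HA Hp]. cbn [fst snd] in HA, Hp.
  split; cbn [shift25 fst snd]; [intro E; apply HA; lra|].
  intros m. specialize (Hp (5 * m + 2)%nat).
  replace (a + RtoC (2 * A) + RtoC (INR m * (5 * A))) with (a + RtoC (INR (5 * m + 2) * A));
    [exact Hp|].
  rewrite <- Cplus_assoc, <- RtoC_plus, plus_INR, mult_INR. f_equal. f_equal. simpl. ring.
Qed.

Lemma Poch_shift25 (p : C * R) (m : nat) : admissible p ->
  Poch (fst p) (INR (5 * m + 2) * snd p) =
  Poch (fst p) (INR 2 * snd p) * Poch (fst (shift25 p)) (INR m * snd (shift25 p)).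
Proof.
  destruct p as [a A]. intros [HA Hp]. simpl fst; simpl snd.
  replace (INR 2 * A)%R with (2 * A)%R by (simpl; ring).
  replace (INR (5 * m + 2) * A)%R with (2 * A + INR m * (5 * A))%R
    by (rewrite plus_INR, mult_INR; simpl; ring).
  apply Poch_add. specialize (Hp 2%nat). simpl in Hp.
  replace (2 * A)%R with ((1 + 1) * A)%R by ring. exact Hp.
Qed.

Lemma poch_prod_shift25 (ps : list (C * R)) (m : nat) : List.Forall admissible ps ->
  poch_prod ps (5 * m + 2) = poch_prod ps 2 * poch_prod (map shift25 ps) m.
Proof.
  unfold poch_prod. induction 1 as [|p ps Hp _ IH]; cbn [map fold_right]; [ring|].
  rewrite IH, Poch_shift25 by exact Hp. ring.
Qed.

Lemma poch_prod_neq_0 (ps : list (C * R)) (n : nat) :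
  List.Forall admissible ps -> poch_prod ps n <> 0.
Proof.
  unfold poch_prod. induction 1 as [|p ps Hp _ IH]; cbn [map fold_right]; [exact C1_nz|].
  apply Cmult_neq_0; [|exact IH].
  apply Poch_neq_0; [apply admissible_not_Gamma_pole, Hp | apply Hp].
Qed.

Lemma poch_prod_cons_pos (r : R) (qs : list (C * R)) (m : nat) : (0 < r)%R ->
  poch_prod ((RtoC r, 1%R) :: qs) m = rising (RtoC r) m * poch_prod qs m.
Proof.
  intros Hr. unfold poch_prod. simpl. rewrite Rmult_1_r, Poch_INR; [reflexivity|].
  apply not_Gamma_pole_pos, Hr.
Qed.

Ltac C_numeral := rewrite ?RtoC_div by lra; simpl INR; rewrite ?RtoC_plus; field.

(* [(5m+2)! = 2 (3)_(5m)], split by Gauss multiplication; [((3+2)/5)_m = m!] *)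
Lemma fact_5m_2 (m : nat) :
  RtoC (INR (fact (5 * m + 2))) =
  2 * RtoC 5 ^ (5 * m) * RtoC (INR (fact m)) * rising (RtoC (3/5)) m *
  rising (RtoC (4/5)) m * rising (RtoC (6/5)) m * rising (RtoC (7/5)) m.
Proof.
  rewrite <- !rising_1, Nat.add_comm, rising_add, rising_mul_5, rising_1.
  replace ((1 + RtoC (INR 2)) / 5) with (RtoC (3/5)) by C_numeral.
  replace ((1 + RtoC (INR 2) + 1) / 5) with (RtoC (4/5)) by C_numeral.
  replace ((1 + RtoC (INR 2) + 2) / 5) with (RtoC 1) by C_numeral.
  replace ((1 + RtoC (INR 2) + 3) / 5) with (RtoC (6/5)) by C_numeral.
  replace ((1 + RtoC (INR 2) + 4) / 5) with (RtoC (7/5)) by C_numeral.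
  change (fact 2) with 2%nat. simpl INR. rewrite RtoC_plus. ring.
Qed.

(** * Fifth roots of unity *)

Lemma alpha5_pow (j : nat) : alpha5 ^ j = Cexp (0%R, (2 * PI * INR j / 5)%R).
Proof.
  induction j as [|j IH].
  - simpl. unfold Cexp, Re, Im; simpl. replace (2 * PI * 0 / 5)%R with 0%R by field.
    rewrite exp_0, cos_0, sin_0. apply injective_projections; simpl; ring.
  - rewrite Cpow_S, IH. unfold alpha5. rewrite <- Cexp_add. f_equal.
    apply injective_projections; cbn [fst snd Cplus]; [ring | rewrite S_INR; field].
Qed.

Lemma alpha5_pow_5 : alpha5 ^ 5 = 1.
Proof.
  rewrite alpha5_pow. replace (2 * PI * INR 5 / 5)%R with (2 * PI)%R by (simpl; field).
  unfold Cexp, Re, Im; simpl. rewrite exp_0, cos_2PI, sin_2PI.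
  apply injective_projections; simpl; ring.
Qed.

Lemma alpha5_pow_neq_1 (j : nat) : (0 < j < 5)%nat -> alpha5 ^ j <> 1.
Proof.
  intros Hj E. rewrite alpha5_pow in E. apply (f_equal snd) in E.
  unfold Cexp, Re, Im in E; simpl in E. rewrite exp_0, Rmult_1_l in E.
  pose proof PI_RGT_0.
  destruct (Nat.le_gt_cases j 2) as [Hle | Hgt].
  - pose proof (le_INR 1 j ltac:(lia)). pose proof (le_INR j 2 Hle) as H2. simpl in *.
    assert (0 < sin (2 * PI * INR j / 5))%R by (apply sin_gt_0; nra). lra.
  - pose proof (le_INR 3 j ltac:(lia)) as H3. pose proof (le_INR j 4 ltac:(lia)) as H4. simpl in *.
    assert (sin (2 * PI * INR j / 5) < 0)%R by (apply sin_lt_0; nra). lra.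
Qed.

Lemma sum_n_pow_mul_sub_1 (b : C) (n : nat) :
  sum_n (fun k => b ^ k) n * (b - 1) = b ^ S n - 1.
Proof.
  induction n as [|n IH].
  - rewrite sum_O. simpl. ring.
  - rewrite sum_Sn. change (plus ?x ?y) with (x + y).
    rewrite Cmult_plus_distr_r, IH. simpl. ring.
Qed.

Lemma sum_n_pow_root_of_unity (b : C) (n : nat) :
  b ^ S n = 1 -> b <> 1 -> sum_n (fun k => b ^ k) n = (0 : C).
Proof.
  intros Hb Hb1.
  assert (Hsub : b - 1 <> 0) by (intro E; apply Hb1; rewrite <- (Cplus_0_l 1), <- E; ring).
  pose proof (sum_n_pow_mul_sub_1 b n) as H. rewrite Hb in H.
  set (s := sum_n (fun k => b ^ k) n) in *. change (@eq C s 0).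
  replace s with (s * (b - 1) / (b - 1)) by (field; exact Hsub).
  rewrite H. field. exact Hsub.
Qed.

Lemma sum_n_alpha5_pow (j : nat) :
  sum_n (fun k => (alpha5 ^ j) ^ k) 4 = (if (j mod 5 =? 0)%nat then RtoC 5 else RtoC 0).
Proof.
  assert (Hj : alpha5 ^ j = alpha5 ^ (j mod 5)).
  { rewrite (Nat.div_mod_eq j 5) at 1.
    rewrite Cpow_add_r, Cpow_mult_r, alpha5_pow_5, Cpow_1_l. ring. }
  rewrite Hj. destruct (Nat.eqb_spec (j mod 5) 0) as [E | E].
  - rewrite E, !sum_Sn, sum_O. simpl. unfold plus. simpl. ring.
  - apply sum_n_pow_root_of_unity.
    + rewrite <- Cpow_mult_r, Nat.mul_comm, Cpow_mult_r, alpha5_pow_5. apply Cpow_1_l.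
    + apply alpha5_pow_neq_1. pose proof (Nat.mod_upper_bound j 5). lia.
Qed.

(** * Multisection of the Fox-Wright series *)

Section SparseSeries.

Context {K : AbsRing} {V : NormedModule K}.
Variables (d r : nat) (b e : nat -> V).
Hypothesis r_lt_d : (r < d)%nat.
Hypothesis b_on : forall q, b (d * q + r)%nat = e q.
Hypothesis b_off : forall q j, (j < d)%nat -> j <> r -> b (d * q + j)%nat = zero.

Let sum_n_b_before (i : nat) : (i < r)%nat -> sum_n b i = zero.
Proof.
  assert (Hb : forall k, (k < r)%nat -> b k = zero).
  { intros k Hk. rewrite <- (b_off 0 k) by lia. f_equal. lia. }
  induction i as [|i IH]; intros Hi.
  - rewrite sum_O. apply Hb, Hi.
  - rewrite sum_Sn, IH, Hb by lia. apply plus_zero_l.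
Qed.

Let sum_n_b_gap (q j : nat) : (S j < d)%nat ->
  sum_n b (d * q + r + S j) = sum_n b (d * q + r + j).
Proof.
  intros Hj. rewrite Nat.add_succ_r, sum_Sn.
  assert (Hz : b (S (d * q + r + j)) = zero).
  { destruct (Nat.lt_ge_cases (r + S j) d) as [Hlt | Hge].
    - replace (S (d * q + r + j)) with (d * q + (r + S j))%nat by lia. apply b_off; lia.
    - replace (S (d * q + r + j)) with (d * S q + (r + S j - d))%nat
        by (rewrite Nat.mul_succ_r; lia).
      apply b_off; lia. }
  rewrite Hz. apply plus_zero_r.
Qed.

Let sum_n_b_block (q : nat) : forall j, (j < d)%nat ->
  sum_n b (d * q + r) = sum_n e q -> sum_n b (d * q + r + j) = sum_n e q.
Proof.
  induction j as [|j IH]; intros Hj Hq.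
  - now rewrite Nat.add_0_r.
  - rewrite sum_n_b_gap by exact Hj. apply IH; [lia | exact Hq].
Qed.

Let sum_n_b_on (q : nat) : sum_n b (d * q + r) = sum_n e q.
Proof.
  induction q as [|q IH].
  - rewrite Nat.mul_0_r, Nat.add_0_l, sum_O, <- (b_on 0).
    destruct r as [|r'].
    + rewrite sum_O. f_equal. lia.
    + rewrite sum_Sn, sum_n_b_before, plus_zero_l by lia. f_equal. lia.
  - replace (d * S q + r)%nat with (S (d * q + r + (d - 1))) by (rewrite Nat.mul_succ_r; lia).
    rewrite !sum_Sn, sum_n_b_block by (lia || exact IH).
    f_equal. rewrite <- b_on. f_equal. rewrite Nat.mul_succ_r. lia.
Qed.

Lemma is_series_sparse (E : V) : is_series e E -> is_series b E.
Proof.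
  intros HE P HP. destruct (HE P HP) as [Q HQ]. exists (d * Q + r)%nat. intros N HN.
  pose proof (Nat.div_mod_eq (N - r) d) as Hdiv.
  pose proof (Nat.mod_upper_bound (N - r) d ltac:(lia)) as Hmod.
  assert (HQq : (Q <= (N - r) / d)%nat) by (apply Nat.div_le_lower_bound; lia).
  replace N with (d * ((N - r) / d) + r + (N - r) mod d)%nat by lia.
  unfold filtermap. rewrite (sum_n_b_block _ _ Hmod (sum_n_b_on _)).
  apply HQ, HQq.
Qed.

End SparseSeries.

Definition lower_params25 (qs : list (C * R)) : list (C * R) :=
  (RtoC (3/5), 1%R) :: (RtoC (4/5), 1%R) :: (RtoC (6/5), 1%R) :: (RtoC (7/5), 1%R) ::
  map shift25 qs.

Lemma FW_term_mul_arg (ps qs : list (C * R)) (z w : C) (n : nat) :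
  FW_term ps qs (z * w) n = FW_term ps qs z n * w ^ n.
Proof. unfold FW_term. rewrite Cpow_mult_l. unfold Cdiv. ring. Qed.

Lemma sum_n_FW_term_rotations (ps qs : list (C * R)) (c x : C) (n : nat) :
  sum_n (fun k => alpha5 ^ k * FW_term ps qs (c * (x * alpha5 ^ k) ^ 2) n) 4 =
  FW_term ps qs (c * x ^ 2) n * (if ((2 * n + 1) mod 5 =? 0)%nat then RtoC 5 else RtoC 0).
Proof.
  rewrite <- sum_n_alpha5_pow.
  etransitivity; [|exact (@sum_n_mult_l C_Ring (FW_term ps qs (c * x ^ 2) n) _ 4)].
  apply sum_n_ext. intros k.
  replace (c * (x * alpha5 ^ k) ^ 2) with (c * x ^ 2 * (alpha5 ^ k) ^ 2) by ring.
  rewrite FW_term_mul_arg.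
  replace ((alpha5 ^ (2 * n + 1)) ^ k) with (alpha5 ^ k * ((alpha5 ^ k) ^ 2) ^ n)
    by (rewrite <- !Cpow_mult_r, <- Cpow_add_r; f_equal; lia).
  change (mult ?u ?v) with (u * v). match goal with |- @eq _ ?u ?v => change (@eq C u v) end.
  ring.
Qed.

Lemma FW_term_5m_2 (ps qs : list (C * R)) (z : C) (m : nat) :
  List.Forall admissible ps -> List.Forall admissible qs ->
  FW_term ps qs z (5 * m + 2) * 5 =
  poch_prod ps 2 / poch_prod qs 2 * (5 * z ^ 2 / 2) *
  FW_term (map shift25 ps) (lower_params25 qs) ((z / 5) ^ 5) m.
Proof.
  intros Hps Hqs. unfold FW_term, lower_params25.
  rewrite (poch_prod_shift25 ps), (poch_prod_shift25 qs), !poch_prod_cons_pos, fact_5m_2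
    by (assumption || lra).
  rewrite <- Cpow_mult_r, Cpow_add_r, Nat.mul_comm.
  assert (H5 : RtoC 5 <> 0) by (apply RtoC_neq_0; lra).
  replace ((z / 5) ^ (m * 5)) with (z ^ (m * 5) / RtoC 5 ^ (m * 5))
    by (unfold Cdiv; rewrite Cpow_mult_l, Cpow_inv by exact H5; reflexivity).
  assert (Hqs' : List.Forall admissible (map shift25 qs))
    by (apply Forall_map; eapply Forall_impl; [exact admissible_shift25 | exact Hqs]).
  assert (Hrising : forall r, (0 < r)%R -> rising (RtoC r) m <> 0)
    by (intros r Hr; apply rising_neq_0, not_Gamma_pole_pos, Hr).
  field. repeat split; try (apply Hrising; lra).
  - apply Cpow_nz, H5.
  - apply poch_prod_neq_0, Hqs'.
  - apply RtoC_neq_0, INR_fact_neq_0.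
  - apply poch_prod_neq_0, Hqs.
Qed.

Lemma is_series_sum_n_FoxWright (ps qs : list (C * R)) (w z : nat -> C) (m : nat) :
  (forall k, (k <= m)%nat -> ex_series (FW_term ps qs (z k))) ->
  is_series (fun n => sum_n (fun k => w k * FW_term ps qs (z k) n) m)
            (sum_n (fun k => w k * FoxWright ps qs (z k)) m).
Proof.
  intros Hcvg. apply (is_series_sum_n (fun k n => w k * FW_term ps qs (z k) n)).
  intros k Hk. destruct (Hcvg k Hk) as [l Hl].
  unfold FoxWright. rewrite (CSeries_correct _ _ Hl).
  exact (@is_series_scal C_AbsRing C_NormedModule _ _ _ Hl).
Qed.

(* Only the terms of index [5m + 2] survive the sum over the rotations [x alpha5^k]. *)
Lemma is_series_sum_n_rotations (ps qs : list (C * R)) (c x D : C) :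
  List.Forall admissible ps -> List.Forall admissible qs ->
  is_series (FW_term (map shift25 ps) (lower_params25 qs) ((c * x ^ 2 / 5) ^ 5)) D ->
  is_series (fun n => sum_n (fun k => alpha5 ^ k * FW_term ps qs (c * (x * alpha5 ^ k) ^ 2) n) 4)
            (poch_prod ps 2 / poch_prod qs 2 * (5 * c ^ 2 * x ^ 4 / 2) * D).
Proof.
  intros Hps Hqs HD.
  set (K := poch_prod ps 2 / poch_prod qs 2 * (5 * c ^ 2 * x ^ 4 / 2)).
  apply (is_series_sparse 5 2 _
           (fun m => K * FW_term (map shift25 ps) (lower_params25 qs) ((c * x ^ 2 / 5) ^ 5) m));
    [lia | | | exact (@is_series_scal C_AbsRing C_NormedModule K _ _ HD)].
  - intros m. rewrite sum_n_FW_term_rotations.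
    replace ((2 * (5 * m + 2) + 1) mod 5 =? 0)%nat with true by (symmetry; apply Nat.eqb_eq; lia).
    cbv iota beta. rewrite FW_term_5m_2 by assumption. unfold K.
    match goal with |- @eq _ ?u ?v => change (@eq C u v) end. unfold Cdiv. ring.
  - intros m j Hj Hj2. rewrite sum_n_FW_term_rotations.
    replace ((2 * (5 * m + j) + 1) mod 5 =? 0)%nat with false by (symmetry; apply Nat.eqb_neq; lia).
    apply Cmult_0_r.
Qed.

Theorem theorem6 (ps qs : list (C * R)) (c x : C) :
  List.Forall admissible ps ->
  List.Forall admissible qs ->
  (forall k : nat, (k < 5)%nat ->
     ex_series (FW_term ps qs (c * (x * alpha5 ^ k) ^ 2))) ->
  ex_series (FW_term (map shift25 ps)
                     ((RtoC (3/5), 1%R) :: (RtoC (4/5), 1%R) ::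
                      (RtoC (6/5), 1%R) :: (RtoC (7/5), 1%R) :: map shift25 qs)
                     ((c * x ^ 2 / 5) ^ 5)) ->
  sum_n (fun k => alpha5 ^ k * FoxWright ps qs (c * (x * alpha5 ^ k) ^ 2)) 4
  = poch_prod ps 2 / poch_prod qs 2 * (5 * c ^ 2 * x ^ 4 / 2) *
    FoxWright (map shift25 ps)
              ((RtoC (3/5), 1%R) :: (RtoC (4/5), 1%R) ::
               (RtoC (6/5), 1%R) :: (RtoC (7/5), 1%R) :: map shift25 qs)
              ((c * x ^ 2 / 5) ^ 5).
Proof.
  intros Hps Hqs Hcvg [D HD]. fold (lower_params25 qs) in *.
  unfold FoxWright at 2. rewrite (CSeries_correct _ _ HD).
  pose proof (is_series_sum_n_FoxWright ps qs (fun k => alpha5 ^ k)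
                (fun k => c * (x * alpha5 ^ k) ^ 2) 4 (fun k Hk => Hcvg k ltac:(lia))) as Hleft.
  pose proof (is_series_sum_n_rotations ps qs c x D Hps Hqs HD) as Hright.
  exact (filterlim_locally_unique _ _ _ Hleft Hright).
Qed.
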